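(* Let $M$ be a matroid of rank $r$ on a ground set of $n$ elements, and write its Tutte polynomial as $T(M;x,y)=\sum_{i,j} b_{i,j}x^iy^j$. Then $$\sum_{i=0}^{n}\sum_{j=0}^{n-i}(-1)^j\binom{n-i}{j}b_{i,j}=(-1)^{n-r}.$$
   Context: For a matroid $M$ on ground set $E$ with rank function $r$, the Tutte polynomial is $T(M;x,y)=\sum_{A\subseteq E}(x-1)^{r(E)-r(A)}(y-1)^{|A|-r(A)}$; the rank of $M$ is $r(E)$. *)

From HB Require Import structures.
From mathcomp Require Import all_boot all_order all_algebra.
Set Implicit Arguments. Unset Strict Implicit. Unset Printing Implicit Defensive.
Import Order.TTheory GRing.Theory Num.Theory.
Local Open Scope ring_scope.

Record matroid (E : finType) := Matroid {
  indep : {set E} -> bool;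
  indep0 : indep set0;
  indep_sub : forall A B : {set E}, A \subset B -> indep B -> indep A;
  indep_exch : forall A B : {set E}, indep A -> indep B -> (#|A| < #|B|)%N ->
     exists2 x, x \in B :\: A & indep (x |: A)
}.

Definition mrank (E : finType) (M : matroid E) (A : {set E}) : nat :=
  \max_(B : {set E} | (B \subset A) && indep M B) #|B|.

Definition matroid_rank (E : finType) (M : matroid E) : nat := mrank M setT.

(* Tutte polynomial as an element of Z[y][x]: the outer variable is x,
   coefficients are polynomials in y. *)
Definition tutte (E : finType) (M : matroid E) : {poly {poly int}} :=
  \sum_(A : {set E})
     ('X - 1) ^+ (matroid_rank M - mrank M A)%N
     * (('X - 1) ^+ (#|A| - mrank M A)%N)%:P.

Definition tutte_coef (E : finType) (M : matroid E) (i j : nat) : int :=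
  ((tutte M)`_i)`_j.

From HB Require Import structures.
From mathcomp Require Import all_boot all_order all_algebra.
From mathcomp Require Import zify ring.
Set Implicit Arguments.
Unset Strict Implicit.
Unset Printing Implicit Defensive.

Import Order.TTheory GRing.Theory Num.Theory.
Local Open Scope ring_scope.

(* The left-hand side is a linear functional of
   T(M;x,y) = sum_A (x-1)^a (y-1)^c, with a = r - r(A) and c = |A| - r(A).
   By Vandermonde in y and a finite difference in x, the term (x-1)^a (y-1)^c
   contributes (-1)^(a+c) C(n+c-a, n), which depends on A only through |A|.
   Grouping the subsets by size leaves (-1)^r sum_k (-1)^k C(n,k) C(n-r+k, n),
   an n-th finite difference of the degree n polynomial k |-> C(n-r+k, n),
   whose leading coefficient is 1/n!; hence the sum is (-1)^(r+n). *)

Lemma signr_addnn (R : pzRingType) m : (-1) ^+ (m + m) = 1 :> R.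
Proof. by rewrite addnn -mul2n mulnC exprM sqrr_sign. Qed.

Lemma signr_subn_add (R : pzRingType) m p q : (m <= p)%N -> (m <= q)%N ->
  (-1) ^+ (p - m + (q - m)) = (-1) ^+ (p + q) :> R.
Proof.
move=> lemp lemq; have -> : (p + q = (p - m + (q - m)) + (m + m))%N by lia.
by rewrite [RHS]exprD signr_addnn mulr1.
Qed.

Lemma coef_Xsub1_exp (R : comNzRingType) a i :
  ((('X - 1) ^+ a : {poly R})`_i) = (-1) ^+ (a + i) *+ 'C(a, i).
Proof.
elim: a i => [|a IHa] [|i] /=.
- by rewrite expr0 coef1 mulr1n.
- by rewrite expr0 coef1 bin0n mulr0n.
- by rewrite exprSr mulrBr mulr1 coefB coefMX IHa !bin0 exprS mulN1r sub0r.
rewrite exprSr mulrBr mulr1 coefB coefMX !IHa binS mulrnDr addrC -mulNrn.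
by rewrite addSn !addnS !exprS !mulN1r !opprK.
Qed.

Lemma sum_bin_mul_bin m c :
  (\sum_(j < m.+1) 'C(m, j) * 'C(c, j) = 'C(c + m, c))%N.
Proof.
rewrite -(bin_sub (leq_addr m c)) addKn -binomial.Vandermonde.
by apply: eq_bigr => j _; rewrite mulnC bin_sub // -ltnS.
Qed.

(* The right-hand side is C(c+n-a, c-a) when a <= c, and 0 otherwise. *)
Lemma sum_sign_bin_backward c a n : (a <= n)%N ->
  \sum_(i < n.+1) (-1) ^+ i * ('C(a, i) * 'C(c + n - i, c))%:R
  = ('C(c + n - a, n))%:R :> int.
Proof.
elim: a n => [|a IHa] n le_an.
  rewrite big_ord_recl big1 => [|i _]; last by rewrite bin0n mul0n mulr0.
  by rewrite expr0 mul1r bin0 mul1n subn0 addr0 -{2}(addnK n c) bin_sub ?leq_addl.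
case: n le_an => [//|n] le_an.
have -> : \sum_(i < n.+2) (-1) ^+ i * ('C(a.+1, i) * 'C(c + n.+1 - i, c))%:R
    = \sum_(i < n.+2) (-1) ^+ i * ('C(a, i) * 'C(c + n.+1 - i, c))%:R
    - \sum_(i < n.+1) (-1) ^+ i * ('C(a, i) * 'C(c + n - i, c))%:R :> int.
  rewrite big_ord_recl [X in _ = X - _]big_ord_recl -addrA !bin0; congr (_ + _).
  rewrite -sumrB; apply: eq_bigr => i _.
  by rewrite lift0 binS addnS subSS !natrM natrD exprS mulN1r; ring.
rewrite !IHa ?(leqW le_an) //; last by rewrite ltnW.
have -> : (c + n.+1 - a = (c + n - a).+1)%N by lia.
by rewrite binS natrD addrK addnS subSS.
Qed.

Lemma sum_sign_bin_forward a p m : (a <= p)%N ->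
  \sum_(k < a.+1) (-1) ^+ k * ('C(a, k) * 'C(m + k, p))%:R
  = (-1) ^+ a * ('C(m, p - a))%:R :> int.
Proof.
elim: a m => [|a IHa] m le_ap.
  by rewrite big_ord_recl big_ord0 addr0 bin0 mul1n addn0 subn0.
have -> : \sum_(k < a.+2) (-1) ^+ k * ('C(a.+1, k) * 'C(m + k, p))%:R
    = \sum_(k < a.+1) (-1) ^+ k * ('C(a, k) * 'C(m + k, p))%:R
    - \sum_(k < a.+1) (-1) ^+ k * ('C(a, k) * 'C(m.+1 + k, p))%:R :> int.
  rewrite big_ord_recl [X in _ = X - _]big_ord_recl !bin0 -addrA; congr (_ + _).
  rewrite [X in _ = X - _](_ : _ = \sum_(k < a.+1)
      (-1) ^+ k.+1 * ('C(a, k.+1) * 'C(m + k.+1, p))%:R); last first.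
    by rewrite [RHS]big_ord_recr /= bin_small // mul0n mulr0 addr0.
  rewrite -sumrB; apply: eq_bigr => k _.
  rewrite lift0 binS addSn addnS !natrM natrD exprS mulN1r; ring.
rewrite !IHa ?(ltnW le_ap) // -(subnSK le_ap) binS natrD exprS; ring.
Qed.

Definition alt_coef_sum n (p : {poly {poly int}}) : int :=
  \sum_(i < n.+1) \sum_(j < (n - i).+1) (-1) ^+ j * ('C(n - i, j))%:R * (p`_i)`_j.

Lemma alt_coef_sum0 n : alt_coef_sum n 0 = 0.
Proof.
by rewrite /alt_coef_sum big1 // => i _; rewrite big1 // => j _; rewrite !coef0 mulr0.
Qed.

Lemma alt_coef_sumD n p q :
  alt_coef_sum n (p + q) = alt_coef_sum n p + alt_coef_sum n q.
Proof.
rewrite /alt_coef_sum -big_split; apply: eq_bigr => i _.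
by rewrite -big_split; apply: eq_bigr => j _; rewrite !coefD mulrDr.
Qed.

Lemma alt_coef_sum_sum I (r : seq I) (P : pred I) n (F : I -> {poly {poly int}}) :
  alt_coef_sum n (\sum_(k <- r | P k) F k)
  = \sum_(k <- r | P k) alt_coef_sum n (F k).
Proof. exact: (big_morph _ (alt_coef_sumD n) (alt_coef_sum0 n)). Qed.

Lemma alt_coef_sum_Xsub1 n a c : (a <= n)%N ->
  alt_coef_sum n (('X - 1) ^+ a * (('X - 1) ^+ c)%:P)
  = (-1) ^+ (a + c) * ('C(c + n - a, n))%:R.
Proof.
move=> le_an; rewrite /alt_coef_sum -(sum_sign_bin_backward c le_an) mulr_sumr.
apply: eq_bigr => i _; have le_in : (i <= n)%N by rewrite -ltnS.
rewrite -addnBA // -sum_bin_mul_bin natrM natr_sum !mulr_sumr; apply: eq_bigr => j _.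
rewrite coefMC coef_Xsub1_exp.
have -> : (-1) ^+ (a + i) *+ 'C(a, i) = ((-1) ^+ (a + i) *+ 'C(a, i))%:P :> {poly int}.
  by rewrite rmorphMn rmorph_sign.
rewrite coefCM coef_Xsub1_exp natrM.
rewrite -[_ *+ 'C(a, i)]mulr_natr -[_ *+ 'C(c, j)]mulr_natr !exprD.
transitivity ((-1) ^+ (j + j) * ((-1) ^+ a * (-1) ^+ c
    * ((-1) ^+ i * ('C(a, i)%:R * ('C(n - i, j)%:R * 'C(c, j)%:R)))) : int).
  by rewrite exprD; ring.
by rewrite signr_addnn mul1r.
Qed.

Lemma mrank_le_card (E : finType) (M : matroid E) A : (mrank M A <= #|A|)%N.
Proof. by apply/bigmax_leqP => B /andP[sBA _]; exact: subset_leq_card. Qed.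

Lemma mrank_le_rank (E : finType) (M : matroid E) A :
  (mrank M A <= matroid_rank M)%N.
Proof.
apply/bigmax_leqP => B /andP[_ indB].
by apply: (@leq_bigmax_cond _ _ _ B); rewrite subsetT indB.
Qed.

Lemma matroid_rank_le_card (E : finType) (M : matroid E) :
  (matroid_rank M <= #|E|)%N.
Proof. by rewrite -cardsT mrank_le_card. Qed.

Lemma sum_set_card (T : finType) (V : nmodType) (F : nat -> V) :
  \sum_(A : {set T}) F #|A| = \sum_(k < #|T|.+1) F k *+ 'C(#|T|, k).
Proof.
rewrite (partition_big (fun A : {set T} => inord #|A| : 'I_#|T|.+1) xpredT) //=.
apply: eq_bigr => k _.
rewrite (eq_bigl (fun A : {set T} => #|A| == k)) => [|A]; last first.
  by rewrite -(inj_eq val_inj) /= inordK // ltnS max_card.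
rewrite (eq_bigr (fun _ => F k)) => [|A /eqP-> //].
by rewrite sumr_const -card_draws cardsE.
Qed.

Theorem corollary5p2 (E : finType) (M : matroid E) :
  let n := #|E| in
  let r := matroid_rank M in
  \sum_(i < n.+1) \sum_(j < (n - i).+1)
      (-1) ^+ j * ('C(n - i, j))%:R * tutte_coef M i j
  = (-1) ^+ (n - r) :> int.
Proof.
move=> n r; have le_rn : (r <= n)%N := matroid_rank_le_card M.
change (alt_coef_sum n (tutte M) = (-1) ^+ (n - r)).
have term A : alt_coef_sum n (('X - 1) ^+ (r - mrank M A)
      * (('X - 1) ^+ (#|A| - mrank M A))%:P)
    = (-1) ^+ (r + #|A|) * ('C(n - r + #|A|, n))%:R.
  have := mrank_le_rank M A; have := mrank_le_card M A; rewrite -/r => le_mA le_mr.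
  rewrite alt_coef_sum_Xsub1 ?signr_subn_add //; last first.
    exact: leq_trans (leq_subr _ _) le_rn.
  by congr (_ * _%:R); congr 'C(_, _); lia.
rewrite /tutte alt_coef_sum_sum (eq_bigr _ (fun A _ => term A)).
rewrite (sum_set_card E (fun k => (-1) ^+ (r + k) * ('C(n - r + k, n))%:R)) -/n.
transitivity ((-1) ^+ r
    * \sum_(k < n.+1) (-1) ^+ k * ('C(n, k) * 'C(n - r + k, n))%:R : int).
  by rewrite mulr_sumr; apply: eq_bigr => k _; rewrite exprD natrM -mulr_natr; ring.
rewrite sum_sign_bin_forward // subnn bin0 mulr1 -exprD.
by rewrite -(signr_subn_add _ (leqnn r) le_rn) subnn add0n.
Qed.
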